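(* Let $S$ be a string of length $n$ and let $P\subseteq[n]$ be a $(\tau,\delta)$-partitioning set of $S$ for parameters $1\le\tau\le\delta\le n$. Let $i,j\in[n]$ and let $\ell=\mathrm{LCE}(i,j)$. If $\ell>2\delta$ then $$\{p-i\mid p\in P\cap[i+\delta..i+\ell-\delta-1]\}=\{p-j\mid p\in P\cap[j+\delta..j+\ell-\delta-1]\}.$$
   Context: $[a..b]=\{a,a+1,\dots,b\}$. $\mathrm{LCE}(i,j)=\min\{k\ge0\mid S[i+k]\ne S[j+k]\}$. A prefix of length $y\ge1$ of a string $W$ is a period of $W$ if $W[x]=W[x+y]$ for all $1\le x\le |W|-y$; $\rho_W$ denotes the length of the shortest period, and $W$ is periodic if $\rho_W\le |W|/2$. A set $P\subseteq[n]$ is a $(\tau,\delta)$-partitioning set of $S$ if (1) (local consistency) for any $i,j\in[1+\delta..n-\delta]$ with $S[i-\delta..i+\delta]=S[j-\delta..j+\delta]$ we have $i\in P\Leftrightarrow j\in P$; and (2) (compactness) for any two consecutive elements $p_i<p_{i+1}$ of $P\cup\{1,n+1\}$, either $p_{i+1}-p_i\le\tau$, or $p_{i+1}-p_i>\tau$ and $u=S[p_i..p_{i+1}-1]$ is periodic with $\rho_u\le\tau$. *)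

(* Strings are 1-indexed: S[x] for 1 <= x <= size S. *)
From mathcomp Require Import all_boot.
Set Implicit Arguments. Unset Strict Implicit. Unset Printing Implicit Defensive.

Section Strings.
Variable T : eqType.

Definition chr (S : seq T) (x : nat) : option T :=
  if (1 <= x <= size S) then nth None (map Some S) x.-1 else None.

Definition substr (S : seq T) (a b : nat) : seq T :=
  take (b.+1 - a) (drop a.-1 S).

(* LCE(i,j) = min { k >= 0 | S[i+k] <> S[j+k] }, where a position outside
   [1..n] never matches (the usual end-of-string convention). *)
Definition lce_mismatch (S : seq T) (i j k : nat) : bool :=
  (size S < i + k) || (size S < j + k) || (chr S (i + k) != chr S (j + k)).

Definition LCE (S : seq T) (i j : nat) : nat :=
  find (lce_mismatch S i j) (iota 0 (size S).+1).

Definition is_period (W : seq T) (y : nat) : bool :=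
  (1 <= y) && all (fun x => chr W x == chr W (x + y)) (iota 1 (size W - y)).

(* rho_W: length of the shortest period (|W| is always a period of nonempty W) *)
Definition rho (W : seq T) : nat :=
  (find (is_period W) (iota 1 (size W))).+1.

Definition periodic (W : seq T) : bool := rho W <= (size W) %/ 2.

Definition partitioning_set (S : seq T) (tau delta : nat) (P : pred nat) : Prop :=
  let n := size S in
  (forall p, P p -> 1 <= p <= n) /\
  (forall i j, 1 + delta <= i <= n - delta -> 1 + delta <= j <= n - delta ->
     substr S (i - delta) (i + delta) = substr S (j - delta) (j + delta) ->
     (P i <-> P j)) /\
  (let Q := fun x => P x || (x == 1) || (x == n.+1) in
   forall a b, Q a -> Q b -> a < b -> (forall c, a < c < b -> ~~ Q c) ->
     b - a <= tau \/
     (tau < b - a /\ periodic (substr S a b.-1) /\ rho (substr S a b.-1) <= tau)).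

End Strings.

From mathcomp Require Import all_boot.
From mathcomp Require Import zify.

(* Within the common extension of length LCE S i j, the text around p and
   around its translate j + (p - i) agrees on a window of radius delta as soon
   as that window stays inside the extension; local consistency then makes
   the two positions simultaneously in P or not.  The argument is symmetric in
   i and j because LCE is. *)

Section Strings.
Variables (T : eqType) (S : seq T).

Lemma chr_nth x : 0 < x -> chr S x = nth None (map Some S) x.-1.
Proof.
rewrite /chr => x_gt0; case: ifP => // /negbT.
by rewrite x_gt0 /= -ltnNge => lt_Sx; rewrite nth_default // size_map; lia.
Qed.

Lemma substr_eq a b m :
  0 < a -> 0 < b -> a + m <= size S -> b + m <= size S ->
  (forall t, t <= m -> chr S (a + t) = chr S (b + t)) ->
  substr S a (a + m) = substr S b (b + m).
Proof.
move=> a_gt0 b_gt0 am_le bm_le eq_ab.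
apply: (inj_map Some_inj); rewrite /substr !map_take !map_drop.
have -> : (a + m).+1 - a = m.+1 by lia.
have -> : (b + m).+1 - b = m.+1 by lia.
have size_window c : c + m <= size S -> size (take m.+1 (drop c.-1 (map Some S))) = m.+1.
  by move=> cm_le; rewrite size_take size_drop size_map; case: ltnP; lia.
apply: (eq_from_nth (x0 := None)); first by rewrite !size_window.
move=> t; rewrite size_window // ltnS => le_tm.
rewrite !nth_take ?ltnS // !nth_drop.
have -> : a.-1 + t = (a + t).-1 by lia.
have -> : b.-1 + t = (b + t).-1 by lia.
by rewrite -!chr_nth ?addn_gt0 ?a_gt0 ?b_gt0 ?eq_ab.
Qed.

Lemma LCE_sym i j : LCE S i j = LCE S j i.
Proof.
apply: eq_find => k.
by rewrite /lce_mismatch [(size S < i + k) || _]orbC eq_sym.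
Qed.

Lemma lce_match i j k : k < LCE S i j ->
  [/\ i + k <= size S, j + k <= size S & chr S (i + k) = chr S (j + k)].
Proof.
move=> lt_k_lce.
have lce_le : LCE S i j <= (size S).+1.
  by rewrite -[X in _ <= X](size_iota 0); apply: find_size.
have := before_find 0 lt_k_lce.
rewrite nth_iota ?add0n; last exact: leq_trans lt_k_lce lce_le.
by move/negbT; rewrite /lce_mismatch !negb_or -!leqNgt => /andP[/andP[-> ->] /negPn/eqP].
Qed.

Lemma substr_eq_lce i j k m : 0 < i -> 0 < j -> k + m < LCE S i j ->
  substr S (i + k) (i + k + m) = substr S (j + k) (j + k + m).
Proof.
move=> i_gt0 j_gt0 lt_km_lce.
have [im_le jm_le _] := @lce_match i j (k + m) lt_km_lce.
apply: substr_eq; [lia | lia | lia | lia | move=> t le_tm].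
by rewrite -!addnA; have [_ _] := @lce_match i j (k + t) ltac:(lia).
Qed.

Lemma partitioning_set_lce_shift tau delta (P : pred nat) i j p :
  partitioning_set S tau delta P -> 0 < i -> 0 < j ->
  i + delta <= p <= i + LCE S i j - delta - 1 ->
  P p -> P (j + (p - i)).
Proof.
move=> [_ [consistent _]] i_gt0 j_gt0 /andP[lo_p hi_p].
have [p_le q_le _] := @lce_match i j (p + delta - i) ltac:(lia).
have := @substr_eq_lce i j (p - delta - i) (2 * delta) i_gt0 j_gt0 ltac:(lia).
have -> : i + (p - delta - i) = p - delta by lia.
have -> : p - delta + 2 * delta = p + delta by lia.
have -> : j + (p - delta - i) = j + (p - i) - delta by lia.
have -> : j + (p - i) - delta + 2 * delta = j + (p - i) + delta by lia.
have range_p : 1 + delta <= p <= size S - delta by apply/andP; split; lia.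
have range_q : 1 + delta <= j + (p - i) <= size S - delta by apply/andP; split; lia.
by move=> eq_windows; apply: (consistent _ _ range_p range_q eq_windows).1.
Qed.

End Strings.

Theorem lemma7 (T : eqType) (S : seq T) (P : pred nat) (tau delta i j : nat) :
  1 <= tau -> tau <= delta -> delta <= size S ->
  partitioning_set S tau delta P ->
  1 <= i <= size S -> 1 <= j <= size S ->
  2 * delta < LCE S i j ->
  forall d : nat,
    (exists p, [/\ P p, i + delta <= p <= i + LCE S i j - delta - 1 & d = p - i]) <->
    (exists p, [/\ P p, j + delta <= p <= j + LCE S i j - delta - 1 & d = p - j]).
Proof.
(* Only local consistency matters; 2 * delta < LCE S i j is implied by either
   range of p being nonempty. *)
move=> _ _ _ partP /andP[i_gt0 _] /andP[j_gt0 _] _ d.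
split=> -[p [Pp range_p ->]].
- exists (j + (p - i)); split; [|by move: range_p => /andP[]; lia|lia].
  exact: partitioning_set_lce_shift partP i_gt0 j_gt0 range_p Pp.
- rewrite LCE_sym in range_p *.
  exists (i + (p - j)); split; [|by move: range_p => /andP[]; lia|lia].
  exact: partitioning_set_lce_shift partP j_gt0 i_gt0 range_p Pp.
Qed.
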